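(* For every graph $G=(V,E)$, the graph $G'$ defined below is chordal bipartite.
   Context: $G'$ has vertices $x_v,y_v$ for each $v\in V$ and $p_{e,u},q_{e,u},p_{e,v},q_{e,v}$ for each edge $e=uv\in E$. Its edges are: $x_vy_u$ for all $u,v\in V$ (including $u=v$); and for each $e=uv\in E$, the edges $p_{e,u}q_{e,u}$, $p_{e,v}q_{e,v}$, $x_up_{e,u}$, $y_vq_{e,u}$, $x_vp_{e,v}$, $y_uq_{e,v}$. A graph is chordal bipartite if it is bipartite and every cycle of length at least $6$ has a chord. *)

From mathcomp Require Import all_boot.
Set Implicit Arguments. Unset Strict Implicit. Unset Printing Implicit Defensive.

(* A simple graph on a finite vertex type V is a relation adj : rel V that is
   symmetric and irreflexive. *)

Definition bipartite (V : finType) (adj : rel V) : Prop :=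
  exists c : V -> bool, forall x y, adj x y -> c x != c y.

Definition is_cycle (V : finType) (adj : rel V) (s : seq V) : Prop :=
  [/\ uniq s, 3 <= size s & cycle adj s].

Definition has_chord (V : finType) (adj : rel V) (s : seq V) : Prop :=
  exists x y, [/\ x \in s, y \in s, (x != y) && adj x y, y != next s x & x != next s y].

Definition chordal_bipartite (V : finType) (adj : rel V) : Prop :=
  bipartite adj /\
  forall s : seq V, is_cycle adj s -> 6 <= size s -> has_chord adj s.

(* The construction G'.  Edge-endpoint pairs (e, u) with e = uv are encoded
   by the ordered pair (u, v) with e u v. *)

(* vertices: inl (inl v) = x_v, inl (inr v) = y_v,
             inr (inl d) = p_{e,u}, inr (inr d) = q_{e,u}  for d = (u,v) *)
Definition Gp_vert (T : finType) (e : rel T) : finType :=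
  ((T + T) + ({p : T * T | e p.1 p.2} + {p : T * T | e p.1 p.2}))%type.

Definition Gp_adj0 (T : finType) (e : rel T) (a b : Gp_vert e) : bool :=
  match a, b with
  | inl (inl v), inl (inr u) => true
  | inr (inl d), inr (inr d') => d == d'
  | inl (inl w), inr (inl d) => w == (val d).1
  | inl (inr w), inr (inr d) => w == (val d).2
  | _, _ => false
  end.

Definition Gp_adj (T : finType) (e : rel T) : rel (Gp_vert e) :=
  fun a b => Gp_adj0 a b || Gp_adj0 b a.

From mathcomp Require Import all_boot.
Set Implicit Arguments. Unset Strict Implicit. Unset Printing Implicit Defensive.

(* Colour x_v and q_{e,u} on one side, y_v and p_{e,u} on the other.  For the
   chords: if a long cycle uses only x- and y-vertices, its first and fourth
   vertices lie on opposite sides of the complete bipartite graph on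
   {x_v} + {y_v}, hence are adjacent.  Otherwise it meets some p_{e,u}; as
   p_{e,u} and q_{e,u} have degree two, the cycle runs x_u p_{e,u} q_{e,u} y_v
   (in one direction or the other), and x_u y_v is a chord. *)

Section CycleChords.
Variables (V : finType) (adj : rel V).

Lemma has_chord_cons4 a b c d t1 t :
  uniq [:: a, b, c, d, t1 & t] -> adj a d -> has_chord adj [:: a, b, c, d, t1 & t].
Proof.
move=> U ad_adj; move: (U); rewrite /= !inE !negb_or.
case/andP=> /and5P[_ _ ad at1 _] /andP[/and4P[_ bd _ _] /andP[/and3P[cd _ _] _]].
exists a, d; split; rewrite ?inE ?eqxx ?orbT ?ad //.
- by rewrite /next /= eqxx eq_sym.
- rewrite /next /= (eq_sym d a) (eq_sym d b) (eq_sym d c).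
  by rewrite (negbTE ad) (negbTE bd) (negbTE cd) eqxx.
Qed.

Lemma has_chord_rot n s : uniq s -> has_chord adj (rot n s) -> has_chord adj s.
Proof.
move=> U [x [y [xs ys xy nxy nyx]]]; exists x, y.
by move: xs ys nxy nyx; rewrite !mem_rot !(next_rot n U).
Qed.

Lemma has_chord_next3 s x : uniq s -> 5 <= size s -> x \in s ->
  adj x (next s (next s (next s x))) -> has_chord adj s.
Proof.
move=> U sz /rot_to[i s' E] x_adj; apply: (has_chord_rot (n := i) U); rewrite E.
have U' : uniq (x :: s') by rewrite -E rot_uniq.
have nE : next (x :: s') =1 next s by rewrite -E; apply: next_rot.
move: sz U' x_adj; rewrite -(size_rot i) E -!nE.
case: s' {E nE} => [|b [|c [|d [|t1 t]]]] // _ U'.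
move: (U'); rewrite /= !inE !negb_or => /andP[/and5P[xb xc _ _ _] /andP[/andP[bc _] _]].
rewrite /next /= eqxx !(eq_sym _ x) (negbTE xb) eqxx (negbTE xc) (eq_sym c b) (negbTE bc) eqxx.
exact: has_chord_cons4.
Qed.

Lemma next_neq_prev (s : seq V) x : uniq s -> 3 <= size s -> x \in s ->
  next s x != prev s x.
Proof.
move=> U sz /rot_to[i s' E].
have U' : uniq (x :: s') by rewrite -E rot_uniq.
rewrite -(next_rot i U) -(prev_rot i U) E; apply/eqP=> nxp.
have : next (x :: s') (next (x :: s') x) = x by rewrite nxp next_prev.
move: sz U'; rewrite -(size_rot i) E {E nxp}.
case: s' => [|a [|b r]] //= _; rewrite !inE !negb_or => /andP[/and3P[xa xb _] _].
by rewrite /next /= eqxx eq_sym (negbTE xa) eqxx => /eqP; rewrite eq_sym (negbTE xb).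
Qed.

Hypothesis adj_sym : symmetric adj.

Lemma next_prev_deg2 s z u w : uniq s -> 3 <= size s -> cycle adj s -> z \in s ->
  (forall t, adj z t -> t = u \/ t = w) ->
  (next s z = u /\ prev s z = w) \/ (next s z = w /\ prev s z = u).
Proof.
move=> U sz C zs z_nbr; have := next_neq_prev U sz zs.
have z_prev : adj z (prev s z) by rewrite adj_sym; apply: prev_cycle.
case: (z_nbr _ (next_cycle C zs)) => ->; case: (z_nbr _ z_prev) => ->;
  rewrite ?eqxx // => _; auto.
Qed.

End CycleChords.

Section ChordsOfGp.
Variables (T : finType) (e : rel T).
Local Notation adj := (@Gp_adj T e).
Local Notation dart := {p : T * T | e p.1 p.2}.

Definition vx v : Gp_vert e := inl (inl v).
Definition vy v : Gp_vert e := inl (inr v).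
Definition vp (d : dart) : Gp_vert e := inr (inl d).
Definition vq (d : dart) : Gp_vert e := inr (inr d).

Lemma Gp_adj_sym : symmetric adj.
Proof. by move=> a b; rewrite /Gp_adj orbC. Qed.

Lemma Gp_bipartite : bipartite adj.
Proof.
exists (fun z : Gp_vert e =>
  match z with inl (inl _) | inr (inr _) => true | _ => false end).
by move=> [[?|?]|[?|?]] [[?|?]|[?|?]].
Qed.

Lemma Gp_adj_p (d : dart) t : adj (vp d) t -> t = vx (val d).1 \/ t = vq d.
Proof. by case: t => [[v|v]|[d'|d']]; rewrite /Gp_adj /= ?orbF // => /eqP->; auto. Qed.

Lemma Gp_adj_q (d : dart) t : adj (vq d) t -> t = vy (val d).2 \/ t = vp d.
Proof. by case: t => [[v|v]|[d'|d']]; rewrite /Gp_adj /= ?orbF // => /eqP->; auto. Qed.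

Definition is_xy (z : Gp_vert e) : bool := if z is inl _ then true else false.

Lemma has_chord_xy s : cycle adj s -> uniq s -> 5 <= size s -> all is_xy s ->
  has_chord adj s.
Proof.
case: s => [|a [|b [|c [|d [|t1 t]]]]] //= /and4P[ab bc cd _] U _ xy.
apply: has_chord_cons4 => //; clear U; move: xy ab bc cd => /and5P[].
case: a => [a|//]; case: b => [b|//]; case: c => [c|//]; case: d => [d|//] _ _ _ _ _.
by case: a => ?; case: b => ?; case: c => ?; case: d.
Qed.

Lemma Gp_cycle_mem_p s (d : dart) : uniq s -> 3 <= size s -> cycle adj s ->
  vq d \in s -> vp d \in s.
Proof.
move=> U sz C Qs.
by case: (next_prev_deg2 Gp_adj_sym U sz C Qs (@Gp_adj_q d)) => [[_ <-]|[<- _]];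
  rewrite ?mem_prev ?mem_next.
Qed.

Lemma has_chord_through_p s (d : dart) : uniq s -> 5 <= size s -> cycle adj s ->
  vp d \in s -> has_chord adj s.
Proof.
move=> U sz C Ps; have sz3 : 3 <= size s by apply: leq_trans sz.
have deg2 := next_prev_deg2 Gp_adj_sym U sz3 C.
case: (deg2 (vp d) _ _ Ps (@Gp_adj_p d)) => [[nP pP]|[nP pP]].
- have Qs : vq d \in s by rewrite -pP mem_prev.
  have nQ : next s (vq d) = vp d by rewrite -pP next_prev.
  case: (deg2 (vq d) _ _ Qs (@Gp_adj_q d)) => [[nQ' _]|[_ pQ]]; first by rewrite nQ in nQ'.
  apply: (has_chord_next3 (x := prev s (vq d)) U sz); first by rewrite mem_prev.
  by rewrite (next_prev U) nQ nP pQ.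
- have Qs : vq d \in s by rewrite -nP mem_next.
  have pQ : prev s (vq d) = vp d by rewrite -nP prev_next.
  case: (deg2 (vq d) _ _ Qs (@Gp_adj_q d)) => [[nQ _]|[_ pQ']]; last by rewrite pQ in pQ'.
  apply: (has_chord_next3 (x := prev s (vp d)) U sz); first by rewrite mem_prev.
  by rewrite (next_prev U) nP nQ pP.
Qed.

End ChordsOfGp.

Theorem lemma11 (T : finType) (e : rel T) :
  symmetric e -> irreflexive e -> chordal_bipartite (@Gp_adj T e).
Proof.
move=> _ _; split; first exact: Gp_bipartite.
move=> s [U sz3 C] sz6; have sz5 : 5 <= size s by apply: ltnW.
have [xy | /allPn[z zs not_xy]] := boolP (all (@is_xy T e) s).
  exact: has_chord_xy.
have [d Ps] : exists d, vp d \in s.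
  case: z zs not_xy => [//|[d|d]] zs _; exists d => //.
  exact: Gp_cycle_mem_p zs.
exact: has_chord_through_p Ps.
Qed.
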